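(* Let $n\in\mathbb N$, $n\ge 2$, let $t\in[a,b]$ and let $f_j:[a,b]\to\mathbb F$, $j=1,\dots,n$, be $g$-differentiable at $t$. Then the product $\prod_{j=1}^n f_j$ is $g$-differentiable at $t$ and \[\Big(\prod_{j=1}^nf_j\Big)_g'(t)=\sum_{k=0}^{n-1}(\Delta g(t^* ))^k\Big(\sum_{\sigma\in F_{n,k+1}}\prod_{j=1}^n(f_j)^{(\sigma_j)}_g(t^* )\Big),\] where the factor $(\Delta g(t^* ))^0$ is interpreted as $1$.
   Context: Let $g:\mathbb R\to\mathbb R$ be nondecreasing and left-continuous, and $\mathbb F\in\{\mathbb R,\mathbb C\}$. For $t\in\mathbb R$ let $\Delta g(t)=g(t^+)-g(t)$, where $g(t^+)$ is the right-hand limit. Let $D_g=\{t\in\mathbb R:\Delta g(t)>0\}$ and $C_g=\{t\in\mathbb R: g \text{ is constant on }(t-\varepsilon,t+\varepsilon)\text{ for some }\varepsilon>0\}$; $C_g$ is open and is uniquely written as a countable union of pairwise disjoint open intervals $C_g=\bigcup_{n\in\Lambda}(a_n,b_n)$ (its connected components). Let $N_g^-=\{a_n:n\in\Lambda\}\setminus D_g$, $N_g^+=\{b_n:n\in\Lambda\}\setminus D_g$, $N_g=N_g^-\cup N_g^+$. Fix $a<b$ with $a\notin N_g^-$ and $b\notin D_g\cup C_g\cup N_g^+$. For $t\in[a,b]$ put $t^*=t$ if $t\notin C_g$ and $t^*=b_n$ if $t\in(a_n,b_n)$. The $g$-derivative of $f:[a,b]\to\mathbb F$ at $t\in[a,b]$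 is $f'_g(t)=\lim_{s\to t}\frac{f(s)-f(t)}{g(s)-g(t)}$ if $t\notin D_g\cup C_g$, and $f'_g(t)=\lim_{s\to t^{*+}}\frac{f(s)-f(t^* )}{g(s)-g(t^* )}$ if $t\in D_g\cup C_g$, provided the (finite) limit exists, in which case $f$ is called $g$-differentiable at $t$; the limits are over $s\in[a,b]$ with $g(s)$ different from the value in the denominator, and at points of $N_g^+\cup\{a\}$ only the right-hand limit is taken while at points of $N_g^-\cup\{b\}$ only the left-hand limit is taken. Notation: $f^{(0)}_g=f$, $f^{(1)}_g=f'_g$; for $\sigma=(\sigma_1,\dots,\sigma_n)\in\{0,1\}^n$, $|\sigma|$ is the number of indices $j$ with $\sigma_j=1$, and $F_{n,k}=\{\sigma\in\{0,1\}^n:|\sigma|=k\}$. *)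

From HB Require Import structures.
From mathcomp Require Import all_boot all_order all_algebra.
From mathcomp Require Import all_classical all_reals all_analysis.
From mathcomp Require Import complex.
Import Order.TTheory GRing.Theory Num.Theory numFieldNormedType.Exports.

Set Implicit Arguments.
Unset Strict Implicit.
Unset Printing Implicit Defensive.

Local Open Scope ring_scope.
Local Open Scope classical_set_scope.

(* The scalar field F in {R, C}: Fld R false = R, Fld R true = R[i]. *)
Definition Fld (R : realType) (isC : bool) : numFieldType :=
  if isC then (R[i] : numFieldType) else (R : numFieldType).

Definition toF (R : realType) (isC : bool) : R -> Fld R isC :=
  match isC return R -> Fld R isC with
  | true => fun x : R => (x%:C)%C
  | false => fun x : R => x
  end.

Section GCalculus.
Variable R : realType.
Implicit Types (g : R -> R) (t : R).

Definition Deltag g t : R := lim (g x @[x --> t^'+]) - g t.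

Definition Dg g : set R := [set t | 0 < Deltag g t].

Definition Cg g : set R :=
  [set t | exists e : R, 0 < e /\ forall s, `|s - t| < e -> g s = g t].

Definition Ngminus g : set R :=
  [set x | exists c, Cg g c /\ has_lbound (connected_component (Cg g) c)
                     /\ x = inf (connected_component (Cg g) c) /\ ~ Dg g x].

Definition Ngplus g : set R :=
  [set x | exists c, Cg g c /\ has_ubound (connected_component (Cg g) c)
                     /\ x = sup (connected_component (Cg g) c) /\ ~ Dg g x].

Definition tstar g t : R :=
  if `[< Cg g t >] then sup (connected_component (Cg g) t) else t.

Variable isC : bool.
Local Notation F := (Fld R isC).
Local Notation emb := (@toF R isC).

Definition is_gderiv g (a b : R) (f : R -> F) t (L : F) : Prop :=
  (Dg g t \/ Cg g t ->
     forall e : F, 0 < e -> exists d : R, 0 < d /\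
       forall s, a <= s <= b -> tstar g t < s < tstar g t + d ->
         g s <> g (tstar g t) ->
         `|(f s - f (tstar g t)) / emb (g s - g (tstar g t)) - L| < e) /\
  (~ (Dg g t \/ Cg g t) ->
     forall e : F, 0 < e -> exists d : R, 0 < d /\
       forall s, a <= s <= b -> `|s - t| < d -> g s <> g t ->
         (Ngplus g t \/ t = a -> t < s) ->
         (Ngminus g t \/ t = b -> s < t) ->
         `|(f s - f t) / emb (g s - g t) - L| < e).

Definition gdifferentiable g a b (f : R -> F) t : Prop :=
  exists L, is_gderiv g a b f t L.

(* f'_g(t): the g-derivative (a chosen limit; meaningful when it exists) *)
Definition gderiv g a b (f : R -> F) t : F := xget 0 (is_gderiv g a b f t).

(* f^{(0)}_g = f, f^{(1)}_g = f'_g *)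
Definition gderiv_sigma g a b (f : R -> F) (sj : bool) t : F :=
  if sj then gderiv g a b f t else f t.

End GCalculus.

Definition sigma_card (n : nat) (s : {ffun 'I_n -> bool}) : nat := #|[set j | s j]|.
Definition Fnk (n k : nat) : {set {ffun 'I_n -> bool}} :=
  [set s | sigma_card s == k].

From HB Require Import structures.
From mathcomp Require Import all_boot all_order all_algebra.
From mathcomp Require Import all_classical all_reals all_analysis.
From mathcomp Require Import complex.
From mathcomp Require Import lra.
Import Order.TTheory GRing.Theory Num.Theory numFieldNormedType.Exports.

Set Implicit Arguments.
Unset Strict Implicit.
Unset Printing Implicit Defensive.

Local Open Scope ring_scope.
Local Open Scope classical_set_scope.

(* Write h(s) = g(s) - g(t^* ) and f_j(s) = f_j(t^* ) + q_j(s) h(s), where q_j is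
   the g-difference quotient of f_j at t^*.  Expanding the product by the number
   of factors q_j h shows that the g-difference quotient of the product is
   sum_k h^k sum_(sigma in F_(n,k+1)) prod_j (q_j or f_j(t^* ) as sigma_j says),
   a polynomial in h and the q_j.  Along the points s over which the limit
   defining the g-derivative is taken, q_j tends to (f_j)'_g(t^* ) and h tends to
   Delta g(t^* ): to the jump of g at t^* when t is in D_g or C_g (then s > t^* ),
   and to 0 by continuity of g otherwise.  The geometric work is to show that
   these points accumulate at t^*, so that the limit is unique, and that the
   g-derivatives at t and at t^* are limits over the same points. *)

Lemma sigma_cardE n (s : {ffun 'I_n -> bool}) : sigma_card s = #|[pred j | s j]|.
Proof. by apply: eq_card => j; rewrite !inE; apply/idP/idP; rewrite in_setE. Qed.

Lemma sigma_card_le n (s : {ffun 'I_n -> bool}) : (sigma_card s <= n)%N.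
Proof. by rewrite sigma_cardE -[n in (_ <= n)%N]card_ord max_card. Qed.

Lemma in_Fnk0 n (s : {ffun 'I_n -> bool}) : (s \in Fnk n 0) = (s == [ffun => false]).
Proof.
rewrite inE sigma_cardE; apply/eqP/eqP => [/card0_eq s0|->].
  by apply/ffunP => j; rewrite ffunE; have := s0 j; rewrite !inE.
by apply: eq_card0 => j; rewrite inE ffunE.
Qed.

Lemma prod_perturbE (K : comPzRingType) n (c q : 'I_n -> K) (h : K) :
  \prod_(j < n) (c j + q j * h) =
  \sum_(k < n.+1) h ^+ k * \sum_(sigma in Fnk n k)
      \prod_(j < n) (if sigma j then q j else c j).
Proof.
pose P (sigma : {ffun 'I_n -> bool}) := \prod_(j < n) (if sigma j then q j else c j).
have weight (sigma : {ffun 'I_n -> bool}) : \prod_(j < n) (if sigma j then q j * h else c j) =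
    h ^+ sigma_card sigma * P sigma.
  rewrite /P sigma_cardE -prodr_const [\prod_(i in _) _]big_mkcond -big_split /=.
  by apply: eq_bigr => j _; rewrite inE; case: (sigma j); rewrite ?mul1r // mulrC.
have inord_card (sigma : {ffun 'I_n -> bool}) (k : 'I_n.+1) :
    (inord (sigma_card sigma) == k) = (sigma \in Fnk n k).
  by rewrite inE -(inj_eq val_inj) /= inordK // ltnS sigma_card_le.
rewrite (eq_bigr (fun j => \sum_(b : bool) (if b then q j * h else c j))); last first.
  by move=> j _; rewrite big_bool addrC.
rewrite bigA_distr_bigA /= (eq_bigr _ (fun sigma _ => weight sigma)).
rewrite (partition_big (fun s => inord (sigma_card s) : 'I_n.+1) xpredT) //=.
apply: eq_bigr => k _; rewrite big_distrr /=.
by apply: eq_big => sigma; rewrite inord_card // inE => /eqP ->.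
Qed.

Lemma prod_perturb_subE (K : comPzRingType) n (c q : 'I_n -> K) (h : K) :
  \prod_(j < n) (c j + q j * h) - \prod_(j < n) c j =
  h * \sum_(k < n) h ^+ k * \sum_(sigma in Fnk n k.+1)
      \prod_(j < n) (if sigma j then q j else c j).
Proof.
rewrite prod_perturbE big_ord_recl /= expr0 mul1r.
rewrite (eq_bigl _ _ (in_Fnk0 (n:=n))) big_pred1_eq.
rewrite (eq_bigr c) => [|j _]; last by rewrite ffunE.
rewrite addrAC subrr add0r big_distrr /=.
by apply: eq_bigr => k _; rewrite mulrA -exprS.
Qed.

Section ProductRuleLimit.
Context {T : Type} {K : numFieldType} (F : set_system T) {FF : Filter F}.

Lemma cvgXn (u : T -> K) (l : K) k :
  u x @[x --> F] --> l -> u x ^+ k @[x --> F] --> l ^+ k.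
Proof.
move=> ul; elim: k => [|k IH]; first by rewrite expr0; exact: cvg_cst.
by under eq_fun do rewrite exprS; rewrite exprS; exact: cvgM.
Qed.

Lemma cvg_prod_diff_quot n (f : 'I_n -> T -> K) (c L : 'I_n -> K) (d : T -> K) (H : K) :
  (\forall x \near F, d x != 0) ->
  (forall j, (f j x - c j) / d x @[x --> F] --> L j) ->
  d x @[x --> F] --> H ->
  (\prod_(j < n) f j x - \prod_(j < n) c j) / d x @[x --> F] -->
    \sum_(k < n) H ^+ k * \sum_(sigma in Fnk n k.+1)
       \prod_(j < n) (if sigma j then L j else c j).
Proof.
move=> d_neq0 fL dH; pose q j x := (f j x - c j) / d x.
apply: (@cvg_trans _ ((fun x => \sum_(k < n) d x ^+ k * \sum_(sigma in Fnk n k.+1)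
    \prod_(j < n) (if sigma j then q j x else c j)) @ F)).
  apply: near_eq_cvg; apply: filterS d_neq0 => x dx0.
  apply: (mulfI dx0); rewrite -(prod_perturb_subE c (q^~ x)) [RHS]mulrC divfK //.
  by congr (_ - _); apply: eq_bigr => j _; rewrite /q divfK // addrC subrK.
apply: cvg_big; [exact: add_continuous | move=> k _].
apply: cvgM; first exact: cvgXn.
apply: cvg_big; [exact: add_continuous | move=> sigma _].
apply: cvg_big; [exact: mul_continuous | move=> j _].
by case: (sigma j); [exact: fL | exact: cvg_cst].
Qed.
End ProductRuleLimit.

Section Embedding.
Variables (R : realType) (isC : bool).

Lemma toF_eq0 (x : R) : (toF isC x == 0) = (x == 0).
Proof. by case: isC => //=; apply/eqP/eqP => [[]|->]. Qed.

Lemma cvg_toF {T : Type} (F : set_system T) {FF : Filter F} (u : T -> R) (l : R) :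
  u x @[x --> F] --> l -> toF isC (u x) @[x --> F] --> toF isC l.
Proof.
case: isC => ul //; apply/cvgrPdist_lt => e e0.
have Re_gt0 : 0 < complex.Re e by move: e0; rewrite ltcE => /andP[].
move/cvgrPdist_lt: ul => /(_ _ Re_gt0); apply: filterS => x lux.
rewrite -rmorphB normc_def /= expr0n addr0 sqrtr_sqr ltcE /= lux andbT.
by move: e0; rewrite ltcE /= => /andP[/eqP <-].
Qed.

End Embedding.

Lemma cvg_withinP {R : realType} {K : numFieldType} (A : set R) (x0 : R)
    (Q : R -> K) (L : K) :
  Q x @[x --> within A (nbhs x0)] --> L <->
  forall e : K, 0 < e -> exists d : R, 0 < d /\
    forall s, A s -> `|s - x0| < d -> `|Q s - L| < e.
Proof.
split => [/cvgrPdist_lt QL e e0 | QL].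
  have /nbhs_ballP[d /= d0 Hd] := QL e e0; exists d; split => // s As sx.
  by rewrite distrC; apply: Hd => //; rewrite /ball /= distrC.
apply/cvgrPdist_lt => e e0; rewrite near_withinE.
have [d [d0 Hd]] := QL e e0; apply/nbhs_ballP; exists d => //= s.
by rewrite /ball /= distrC => sx As; rewrite distrC; apply: Hd.
Qed.

Section GDerivativeDomain.
Variable R : realType.
Implicit Types (g : R -> R) (a b t x : R).

Definition right_dom g a b x : set R := [set s | a <= s <= b /\ x < s /\ g s <> g x].

Definition two_sided_dom g a b t : set R :=
  [set s | (a <= s <= b) /\ g s <> g t /\ (Ngplus g t \/ t = a -> t < s) /\
           (Ngminus g t \/ t = b -> s < t)].

Definition gderiv_dom g a b t : set R :=
  if `[< Dg g t \/ Cg g t >] then right_dom g a b (tstar g t) else two_sided_dom g a b t.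

Lemma tstar_notCg g t : ~ Cg g t -> tstar g t = t.
Proof. by move=> nCt; rewrite /tstar asboolF. Qed.

Lemma gderiv_dom_neq g a b t s : gderiv_dom g a b t s -> g s <> g (tstar g t).
Proof.
rewrite /gderiv_dom; case: asboolP => [_ [_ []]//|nDC [_ []]].
by rewrite tstar_notCg // => nCt; apply: nDC; right.
Qed.

Variable isC : bool.
Local Notation F := (Fld R isC).

Definition gdiff_quot g (f : R -> F) x s : F := (f s - f x) / toF isC (g s - g x).

Lemma is_gderiv_cvg g a b (f : R -> F) t L :
  is_gderiv g a b f t L <->
  gdiff_quot g f (tstar g t) s @[s --> within (gderiv_dom g a b t) (nbhs (tstar g t))] --> L.
Proof.
rewrite cvg_withinP /gderiv_dom /is_gderiv; case: asboolP => DC.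
  split => [[fL _] e e0 | fL]; last first.
    split => // _ e e0; have [d [d0 Hd]] := fL e e0; exists d; split => // s sab.
    move=> /andP[ts std] gs; apply: Hd; first by [].
    by rewrite gtr0_norm ?subr_gt0 // ltrBlDl.
  have [d [d0 Hd]] := fL DC e e0; exists d; split => // s [sab [ts gs]] std.
  apply: Hd => //; rewrite ts -ltrBlDl.
  by rewrite gtr0_norm ?subr_gt0 in std.
have -> : tstar g t = t by apply: tstar_notCg => Ct; apply: DC; right.
split => [[_ fL] e e0 | fL].
  have [d [d0 Hd]] := fL DC e e0; exists d; split => // s [sab [gs [P Q]]] std.
  exact: Hd.
split => // _ e e0; have [d [d0 Hd]] := fL e e0; exists d; split => //.
by move=> s sab std gs P Q; apply: Hd.
Qed.

Lemma gderiv_unique g a b (f : R -> F) t L :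
  closure (gderiv_dom g a b t) (tstar g t) -> is_gderiv g a b f t L ->
  gderiv g a b f t = L.
Proof.
move=> cl fL; apply: xget_unique => // L' fL'.
have PF := fmap_proper_filter (gdiff_quot g f (tstar g t)) (within_nbhs_proper cl).
by apply: (@cvg_unique _ (@norm_hausdorff _ F) _ PF L' L); apply/is_gderiv_cvg.
Qed.

End GDerivativeDomain.

Section RealComponents.
Variables (R : realType) (S : set R).
Local Notation comp := (connected_component S).

Lemma component_itv c u v : u <= c <= v -> (forall z, u <= z <= v -> S z) ->
  forall z, u <= z <= v -> comp c z.
Proof.
move=> cuv uvS z zuv; apply: (@connected_component_max _ _ `[u, v]).
- by rewrite /= in_itv.
- by move=> w /=; rewrite in_itv => /uvS.
- exact/connected_intervalP/interval_is_interval.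
- by rewrite /= in_itv.
Qed.

Lemma component_convex c y z : S c -> comp c y -> c <= z <= y \/ y <= z <= c -> comp c z.
Proof.
move=> Sc cy; have /connected_intervalP comp_itv := @component_connected _ S c.
have cc := connected_component_refl Sc.
by case=> czy; [apply: (comp_itv c y) | apply: (comp_itv y c)].
Qed.

Lemma component_lt_sup c z : S c -> has_ubound (comp c) ->
  c <= z < sup (comp c) -> S z.
Proof.
move=> Sc ub /andP[cz zs]; have cc := connected_component_refl Sc.
have [|y cy /ltW zy] := sup_gt _ zs; first by exists c.
by apply: (connected_component_sub (x := c)); apply: (component_convex Sc cy); left; rewrite cz.
Qed.

Lemma component_gt_inf c z : S c -> has_lbound (comp c) ->
  inf (comp c) < z <= c -> S z.
Proof.
move=> Sc lb /andP[iz zc]; have cc := connected_component_refl Sc.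
have [|y cy /ltW yz] := inf_lt _ iz; first by exists c.
by apply: (connected_component_sub (x := c)); apply: (component_convex Sc cy); right; rewrite zc andbT.
Qed.

Lemma sup_component_notin c : open S -> S c -> has_ubound (comp c) -> ~ S (sup (comp c)).
Proof.
move=> oS Sc ub; set x := sup (comp c) => Sx.
have cx : c <= x by apply: ub_le_sup => //; exact: connected_component_refl.
have /nbhs_ballP[e /= e0 eS] : nbhs x S by move: oS; rewrite openE => /(_ _ Sx).
have xe : x < x + e / 2 by lra.
have cxe : c <= x + e / 2 := le_trans cx (ltW xe).
have : comp c (x + e / 2).
  apply: (component_itv (u := c) (v := x + e / 2)) => [|z /andP[cz ze]|]; rewrite ?lexx ?cxe //.
  have [zx|xz] := ltP z x; first by apply: (component_lt_sup Sc ub); rewrite cz.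
  by apply: eS; rewrite /ball /= ler0_norm ?subr_le0 // opprB; lra.
by move/(ub_le_sup ub); rewrite -/x leNgt xe.
Qed.

Lemma inf_component_notin c : open S -> S c -> has_lbound (comp c) -> ~ S (inf (comp c)).
Proof.
move=> oS Sc lb; set x := inf (comp c) => Sx.
have xc : x <= c by apply: ge_inf => //; exact: connected_component_refl.
have /nbhs_ballP[e /= e0 eS] : nbhs x S by move: oS; rewrite openE => /(_ _ Sx).
have xe : x - e / 2 < x by lra.
have exc : x - e / 2 <= c := le_trans (ltW xe) xc.
have : comp c (x - e / 2).
  apply: (component_itv (u := x - e / 2) (v := c)) => [|z /andP[ez zc]|]; rewrite ?lexx ?exc //.
  have [xz|zx] := ltP x z; first by apply: (component_gt_inf Sc lb); rewrite xz.
  by apply: eS; rewrite /ball /= ger0_norm ?subr_ge0 //; lra.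
by move/(ge_inf lb); rewrite -/x leNgt xe.
Qed.

Lemma sup_component_eq y c x : (forall z, y < z < x -> S z) -> ~ S x -> y < c < x ->
  has_ubound (comp c) /\ sup (comp c) = x.
Proof.
move=> yxS nSx /andP[yc cx]; have Sc : S c by apply: yxS; rewrite yc cx.
have cc := connected_component_refl Sc.
have ubx : ubound (comp c) x.
  move=> z cz; rewrite leNgt; apply/negP => xz; apply: nSx.
  by apply: (connected_component_sub (x := c)); apply: (component_convex Sc cz); left; rewrite !ltW.
have ub : has_ubound (comp c) by exists x.
split => //; apply/eqP; rewrite eq_le ge_sup //=; last by exists c.
rewrite leNgt; apply/negP => sx; have cs := ub_le_sup ub cc.
have [sw wx] := midf_lt sx; set w := (_ + x) / 2 in sw wx.
have cw : comp c w.
  have cw := le_trans cs (ltW sw).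
  apply: (component_itv (u := c) (v := w)) => [|z /andP[cz zw]|]; rewrite ?lexx ?cw //.
  by apply: yxS; apply/andP; split; lra.
by have := ub_le_sup ub cw; rewrite leNgt sw.
Qed.

Lemma inf_component_eq x c y : (forall z, x < z < y -> S z) -> ~ S x -> x < c < y ->
  has_lbound (comp c) /\ inf (comp c) = x.
Proof.
move=> xyS nSx /andP[xc cy]; have Sc : S c by apply: xyS; rewrite xc cy.
have cc := connected_component_refl Sc.
have lbx : lbound (comp c) x.
  move=> z cz; rewrite leNgt; apply/negP => zx; apply: nSx.
  by apply: (connected_component_sub (x := c)); apply: (component_convex Sc cz); right; rewrite !ltW.
have lb : has_lbound (comp c) by exists x.
split => //; apply/eqP; rewrite eq_le lb_le_inf //=; last by exists c.
rewrite andbT leNgt; apply/negP => xi; have ic := ge_inf lb cc.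
have [xw wi] := midf_lt xi; set w := (x + _) / 2 in xw wi.
have cw : comp c w.
  have wc := le_trans (ltW wi) ic.
  apply: (component_itv (u := w) (v := c)) => [|z /andP[wz zc]|]; rewrite ?lexx ?wc //.
  by apply: xyS; apply/andP; split; lra.
by have := ge_inf lb cw; rewrite leNgt wi.
Qed.

End RealComponents.

Section Closure.
Variable R : realType.

Lemma closure_right (A : set R) x b : x < b -> (forall s, x < s <= b -> A s) -> closure A x.
Proof.
move=> xb xbA B /nbhs_ballP[d /= d0 dB]; set s := Num.min (x + d / 2) b.
have xs : x < s by rewrite lt_min xb andbT; lra.
have sxd : s <= x + d / 2 by rewrite ge_min lexx.
exists s; split; first by apply: xbA; rewrite xs ge_min lexx orbT.
by apply: dB; rewrite /ball /= ltr_distlC; apply/andP; split; lra.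
Qed.

Lemma closure_left (A : set R) a x : a < x -> (forall s, a <= s < x -> A s) -> closure A x.
Proof.
move=> ax axA B /nbhs_ballP[d /= d0 dB]; set s := Num.max (x - d / 2) a.
have sx : s < x by rewrite gt_max ax andbT; lra.
have xds : x - d / 2 <= s by rewrite le_max lexx.
exists s; split; first by apply: axA; rewrite sx le_max lexx orbT.
by apply: dB; rewrite /ball /= ltr_distlC; apply/andP; split; lra.
Qed.

End Closure.

Section NondecreasingIntegrator.
Variables (R : realType) (g : R -> R).
Hypothesis g_nd : {homo g : x y / x <= y}.
Implicit Types (t x y z : R).

Local Notation values_right t := (g @` [set` Interval (BRight t) +oo%O]).

Lemma values_right_lb t : has_lbound (values_right t).
Proof. by exists (g t) => _ [s /= + <-]; rewrite in_itv /= andbT => /ltW; exact: g_nd. Qed.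

Lemma cvg_right_values t : g x @[x --> t^'+] --> inf (values_right t).
Proof.
apply: nondecreasing_at_right_cvgr => //; last exact: values_right_lb.
by move=> x y _ _; exact: g_nd.
Qed.

Lemma DeltagE t : Deltag g t = inf (values_right t) - g t.
Proof. by rewrite /Deltag (cvg_lim (@Rhausdorff R) (@cvg_right_values t)). Qed.

Lemma le_inf_values_right t : g t <= inf (values_right t).
Proof.
apply: lb_le_inf; first by exists (g (t + 1)), (t + 1); rewrite //= in_itv /= andbT ltrDl.
by move=> _ [s /= + <-]; rewrite in_itv /= andbT => /ltW; exact: g_nd.
Qed.

Lemma inf_values_right_le t s : t < s -> inf (values_right t) <= g s.
Proof.
by move=> ts; apply: ge_inf; [exact: values_right_lb | exists s; rewrite //= in_itv /= andbT].
Qed.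

Lemma Dg_lt t s : Dg g t -> t < s -> g t < g s.
Proof.
rewrite /Dg /= DeltagE subr_gt0 => Dt /inf_values_right_le; exact: lt_le_trans.
Qed.

Lemma notDg_cvg_right t : ~ Dg g t -> g x @[x --> t^'+] --> g t.
Proof.
move=> /negP; rewrite /Dg /= DeltagE -leNgt subr_le0 => le_inf.
suff <- : inf (values_right t) = g t by exact: cvg_right_values.
by apply/eqP; rewrite eq_le le_inf le_inf_values_right.
Qed.

Lemma notDg_Deltag0 t : ~ Dg g t -> Deltag g t = 0.
Proof.
by move=> /notDg_cvg_right/(cvg_lim (@Rhausdorff R)); rewrite /Deltag => ->; rewrite subrr.
Qed.

Lemma Cg_between y x z : y < x < z -> g y = g z -> Cg g x.
Proof.
move=> /andP[yx xz] gyz; exists (Num.min (x - y) (z - x)); split.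
  by rewrite lt_min !subr_gt0 yx xz.
have const w : y <= w <= z -> g w = g y.
  by move=> /andP[yw wz]; apply/eqP; rewrite eq_le (g_nd yw) andbT gyz g_nd.
move=> s; rewrite lt_min !ltr_distlC => /andP[/andP[_ ys] /andP[sz _]].
by rewrite !const // ?(ltW yx) ?(ltW xz) //; apply/andP; split; lra.
Qed.

Lemma open_Cg : open (Cg g).
Proof.
rewrite openE => x [e [e0 xe]]; apply/nbhs_ballP; exists e => //= z; rewrite /ball /= => xz.
exists (e - `|z - x|); split; first by rewrite subr_gt0 distrC.
move=> s; rewrite ltrBrDr => sz; rewrite !xe ?(distrC z) //.
by rewrite -(subrK z s) -addrA (le_lt_trans (ler_normD _ _)).
Qed.

Lemma Cg_const u v : u <= v -> (forall z, u <= z <= v -> Cg g z) -> g v = g u.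
Proof.
move=> uv uvC; pose W := [set w | u <= w <= v /\ g w = g u].
have Wu : W u by split; rewrite ?lexx ?uv.
have ubW : ubound W v by move=> w [/andP[]].
set w0 := sup W.
have uw0 : u <= w0 by apply: ub_le_sup => //; exists v.
have w0v : w0 <= v by apply: ge_sup => //; exists u.
have below z : u <= z < w0 -> g z = g u.
  move=> /andP[uz zw0]; have [|w [_ gw] /ltW zw] := sup_gt _ zw0; first by exists u.
  by apply/eqP; rewrite eq_le -{1}gw !g_nd.
have [e [e0 near_w0]] := uvC w0 (introT andP (conj uw0 w0v)).
have gw0 : g w0 = g u.
  have [uw|] := ltP u w0; last by move=> w0u; rewrite (@le_anti _ _ w0 u) ?uw0 ?w0u.
  set z := Num.max u (w0 - e / 2).
  have zw0 : z < w0 by rewrite gt_max uw /=; lra.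
  rewrite -(below z) ?le_max ?lexx ?zw0 // near_w0 //.
  have w0z : w0 - e / 2 <= z by rewrite le_max lexx orbT.
  by rewrite ltr0_norm ?subr_lt0 // opprB; lra.
have [w0v'|vw0] := ltP w0 v; last by rewrite (@le_anti _ _ v w0) ?w0v ?vw0.
set p := Num.min (w0 + e / 2) v.
have w0p : w0 < p by rewrite lt_min w0v' andbT; lra.
have Wp : W p.
  split; first by rewrite (le_trans uw0 (ltW w0p)) ge_min lexx orbT.
  have pw0 : p <= w0 + e / 2 by rewrite ge_min lexx.
  by rewrite -gw0 near_w0 // gtr0_norm ?subr_gt0 //; lra.
by have := ub_le_sup (ex_intro _ v ubW) Wp; rewrite leNgt w0p.
Qed.

Hypothesis g_lc : forall t, g x @[x --> t^'-] --> g t.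

Lemma notDg_continuous t : ~ Dg g t -> g x @[x --> t] --> g t.
Proof. by move=> nDt; apply/left_right_continuousP; split; [exact: g_lc | exact: notDg_cvg_right]. Qed.

Lemma Ngplus_const_left x : Ngplus g x -> exists2 y, y < x & g y = g x.
Proof.
move=> [c [Cc [ub [{x}-> _]]]]; set x := sup _.
have nCx : ~ Cg g x := sup_component_notin open_Cg Cc ub.
have cx : c < x.
  rewrite lt_neqAle ub_le_sup ?andbT //; last exact: connected_component_refl.
  by apply/eqP => cx; apply: nCx; rewrite -cx.
have const z : c <= z < x -> g z = g c.
  move=> /andP[cz zx]; apply: Cg_const cz _ => w /andP[cw wz].
  by apply: (component_lt_sup Cc ub); rewrite cw (le_lt_trans wz zx).
exists c => //; apply: (@cvg_unique _ (@Rhausdorff R) (g @ x^'-)); last exact: g_lc.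
apply: cvg_near_cst; apply: filterS2 (nbhs_left_ge cx) (nbhs_left_lt x) => z cz zx.
by apply: const; rewrite cz zx.
Qed.

Lemma Ngminus_const_right x : Ngminus g x -> exists2 y, x < y & g y = g x.
Proof.
move=> [c [Cc [lb [{x}-> nDx]]]]; set x := inf _ in nDx *.
have nCx : ~ Cg g x := inf_component_notin open_Cg Cc lb.
have xc : x < c.
  rewrite lt_neqAle ge_inf ?andbT //; last exact: connected_component_refl.
  by apply/eqP => xc; apply: nCx; rewrite xc.
have const z : x < z <= c -> g z = g c.
  move=> /andP[xz zc]; apply/esym; apply: Cg_const zc _ => w /andP[zw wc].
  by apply: (component_gt_inf Cc lb); rewrite wc (lt_le_trans xz zw).
exists c => //; apply: (@cvg_unique _ (@Rhausdorff R) (g @ x^'+)); last first.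
  exact: notDg_cvg_right.
apply: cvg_near_cst; apply: filterS2 (nbhs_right_gt x) (nbhs_right_le xc) => z xz zc.
by apply: const; rewrite xz zc.
Qed.

Lemma Ngplus_of_const_left x y : ~ Cg g x -> ~ Dg g x -> y < x -> g y = g x -> Ngplus g x.
Proof.
move=> nCx nDx yx gyx; set c := (y + x) / 2; have [yc cx] := midf_lt yx.
have yxC z : y < z < x -> Cg g z by move=> yzx; exact: (Cg_between yzx gyx).
have [ub sup_x] := sup_component_eq yxC nCx (introT andP (conj yc cx)).
by exists c; rewrite sup_x; split => //; apply: yxC; rewrite yc cx.
Qed.

Lemma Ngminus_of_const_right x y : ~ Cg g x -> ~ Dg g x -> x < y -> g y = g x -> Ngminus g x.
Proof.
move=> nCx nDx xy gyx; set c := (x + y) / 2; have [xc cy] := midf_lt xy.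
have xyC z : x < z < y -> Cg g z by move=> xzy; exact: (Cg_between xzy (esym gyx)).
have [lb inf_x] := inf_component_eq xyC nCx (introT andP (conj xc cy)).
by exists c; rewrite inf_x; split => //; apply: xyC; rewrite xc cy.
Qed.

Lemma Ngplus_right_neq x y : ~ Cg g x -> Ngplus g x -> x < y -> g y <> g x.
Proof.
move=> nCx /Ngplus_const_left[z zx gz] xy gy; apply: nCx.
by apply: (Cg_between (y := z) (z := y)); rewrite ?zx ?xy // gz gy.
Qed.

Lemma Ngminus_left_neq x y : ~ Cg g x -> Ngminus g x -> y < x -> g y <> g x.
Proof.
move=> nCx /Ngminus_const_right[z xz gz] yx gy; apply: nCx.
by apply: (Cg_between (y := y) (z := z)); rewrite ?yx ?xz // gz gy.
Qed.

Lemma not_Ngplus_Ngminus x : ~ Cg g x -> Ngplus g x -> ~ Ngminus g x.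
Proof. by move=> nCx Px /Ngminus_const_right[y xy gy]; exact: (Ngplus_right_neq nCx Px xy gy). Qed.

End NondecreasingIntegrator.

Section GDerivativeDomainGeometry.
Variables (R : realType) (g : R -> R) (a b : R).
Hypothesis g_nd : {homo g : x y / x <= y}.
Hypothesis g_lc : forall t, g x @[x --> t^'-] --> g t.
Hypothesis ab : a < b.
Hypothesis a_notin : ~ Ngminus g a.
Hypothesis b_notin : ~ (Dg g b \/ Cg g b \/ Ngplus g b).

Lemma tstar_spec t : a <= t <= b -> Dg g t \/ Cg g t ->
  [/\ a <= tstar g t < b, ~ Cg g (tstar g t) & Dg g (tstar g t) \/ Ngplus g (tstar g t)].
Proof.
move=> /andP[aT tb] DCt; have [Ct|nCt] := pselect (Cg g t); last first.
  have Dt : Dg g t by case: DCt.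
  rewrite tstar_notCg //; split; [|done|by left].
  by rewrite aT lt_neqAle tb andbT; apply/eqP => tbE; apply: b_notin; left; rewrite -tbE.
rewrite /tstar asboolT //; set x := sup _.
have tt := connected_component_refl Ct.
have ubb : ubound (connected_component (Cg g) t) b.
  move=> y ty; rewrite leNgt; apply/negP => by_; apply: b_notin; right; left.
  apply: (connected_component_sub (x := t)).
  by apply: (component_convex Ct ty); left; rewrite tb ltW.
have ub : has_ubound (connected_component (Cg g) t) by exists b.
have nCx : ~ Cg g x := sup_component_notin (@open_Cg _ g) Ct ub.
have tx : t <= x := ub_le_sup ub tt.
have xb : x <= b := ge_sup (ex_intro _ t tt) ubb.
have Px : Dg g x \/ Ngplus g x.
  by have [|nDx] := pselect (Dg g x); [left | right; exists t].
split => //; rewrite (le_trans aT tx) lt_neqAle xb andbT.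
by apply/eqP => xbE; apply: b_notin; rewrite -xbE; case: Px; [left | right; right].
Qed.

Lemma gderiv_dom_tstar t : a <= t <= b ->
  tstar g (tstar g t) = tstar g t /\ gderiv_dom g a b (tstar g t) = gderiv_dom g a b t.
Proof.
move=> tab; have [DCt|nDCt] := pselect (Dg g t \/ Cg g t); last first.
  have nCt : ~ Cg g t by move=> Ct; apply: nDCt; right.
  by rewrite !(tstar_notCg nCt).
have [xab nCx Px] := tstar_spec tab DCt; set x := tstar g t in xab nCx Px *.
have xx : tstar g x = x := tstar_notCg nCx.
split => //; rewrite /gderiv_dom xx (asboolT DCt) -/x; case: asboolP => [// | nDCx].
have {}Px : Ngplus g x by case: Px => // Dx; exfalso; apply: nDCx; left.
apply/seteqP; split => s /=.
  by move=> [sab [gs [/(_ (or_introl Px)) xs _]]].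
move=> [sab [xs gs]]; do 3 split => //; case=> [Nx | xb].
  by have := not_Ngplus_Ngminus g_nd g_lc nCx Px.
by move: xab; rewrite xb ltxx andbF.
Qed.

Lemma two_sided_dom_closure t : a <= t <= b -> ~ Dg g t -> ~ Cg g t ->
  closure (two_sided_dom g a b t) t.
Proof.
move=> /andP[aT tb] nDt nCt.
pose right_neq := forall y, t < y -> g y <> g t.
pose left_neq := forall y, y < t -> g y <> g t.
have right_neqP : Ngplus g t \/ t = a -> right_neq.
  case=> [Pt | ta] y ty gy; first exact: (Ngplus_right_neq g_nd g_lc nCt Pt ty gy).
  by apply: a_notin; rewrite -ta; exact: (Ngminus_of_const_right g_nd nCt nDt ty gy).
have left_neqP : Ngminus g t \/ t = b -> left_neq.
  case=> [Mt | tbE] y yt gy; first exact: (Ngminus_left_neq g_nd nCt Mt yt gy).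
  by apply: b_notin; right; right; rewrite -tbE; exact: (Ngplus_of_const_left g_nd nCt nDt yt gy).
have one_side : right_neq \/ left_neq.
  have [|nR] := pselect right_neq; [by left | right => y yt gy; apply: nR => z tz gz].
  by apply: nCt; apply: (@Cg_between _ _ g_nd y t z); rewrite ?yt ?tz // gy gz.
(* Pick a side on which g moves away from g t and that the side conditions allow. *)
have [[rneq nL] | [lneq nR]] :
    right_neq /\ ~ (Ngminus g t \/ t = b) \/ left_neq /\ ~ (Ngplus g t \/ t = a).
  have [Pt|nPt] := pselect (Ngplus g t \/ t = a).
    left; split; first exact: right_neqP.
    case: Pt => [Pt [Mt | tbE] | ta [Mt | tbE]].
    - exact: (not_Ngplus_Ngminus g_nd g_lc nCt Pt Mt).
    - by apply: b_notin; right; right; rewrite -tbE.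
    - by apply: a_notin; rewrite -ta.
    - by move: ab; rewrite -ta tbE ltxx.
  have [Mt|nMt] := pselect (Ngminus g t \/ t = b); first by right; split => //; exact: left_neqP.
  by case: one_side => ?; [left | right].
- have tb' : t < b by rewrite lt_neqAle tb andbT; apply/eqP => tbE; apply: nL; right.
  apply: (closure_right tb') => s /andP[ts sb].
  by split; [rewrite (le_trans aT (ltW ts)) | split; [exact: rneq | split => // /nL]].
- have aT' : a < t by rewrite lt_neqAle aT andbT; apply/eqP => ta; apply: nR; right.
  apply: (closure_left aT') => s /andP[aS st].
  by split; [rewrite aS (le_trans (ltW st)) | split; [exact: lneq | split => // /nR]].
Qed.

Lemma gderiv_dom_closure t : a <= t <= b -> closure (gderiv_dom g a b t) (tstar g t).
Proof.
move=> tab; rewrite /gderiv_dom; case: asboolP => [DCt|nDCt].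
  have [/andP[ax xb] nCx Px] := tstar_spec tab DCt.
  apply: (closure_right xb) => s /andP[xs sb].
  split; first by rewrite (le_trans ax (ltW xs)) sb.
  split => //; case: Px => [Dx | Px]; last exact: (Ngplus_right_neq g_nd g_lc nCx Px xs).
  by move=> gs; have := Dg_lt g_nd Dx xs; rewrite gs ltxx.
have nCt : ~ Cg g t by move=> Ct; apply: nDCt; right.
by rewrite tstar_notCg //; apply: two_sided_dom_closure => // Dt; apply: nDCt; left.
Qed.

Lemma cvg_gderiv_dom t : a <= t <= b ->
  g s - g (tstar g t) @[s --> within (gderiv_dom g a b t) (nbhs (tstar g t))] -->
  Deltag g (tstar g t).
Proof.
move=> tab; rewrite /gderiv_dom; case: asboolP => [DCt|nDCt].
  set x := tstar g t; rewrite DeltagE //; apply: cvgB; last exact: cvg_cst.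
  have sub : within (right_dom g a b x) (nbhs x) `=>` x^'+.
    by apply: within_subset => // s [_ []].
  exact: (cvg_trans (cvg_fmap2 sub) (@cvg_right_values _ _ g_nd x)).
have nCt : ~ Cg g t by move=> Ct; apply: nDCt; right.
have nDt : ~ Dg g t by move=> Dt; apply: nDCt; left.
rewrite tstar_notCg // notDg_Deltag0 //.
have g_cvg : g s - g t @[s --> t] --> 0.
  by rewrite -(subrr (g t)); apply: cvgB; [exact: (notDg_continuous g_nd g_lc nDt) | exact: cvg_cst].
exact: (cvg_trans (cvg_fmap2 (cvg_within _)) g_cvg).
Qed.

Variable isC : bool.

Lemma gderiv_tstar (f : R -> Fld R isC) t L : a <= t <= b ->
  is_gderiv g a b f t L -> gderiv g a b f (tstar g t) = L.
Proof.
move=> tab fL; have [tt dom] := gderiv_dom_tstar tab.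
apply: gderiv_unique; first by rewrite tt dom; exact: gderiv_dom_closure.
by apply/is_gderiv_cvg; rewrite tt dom; apply/is_gderiv_cvg.
Qed.

End GDerivativeDomainGeometry.

Theorem proposition2p7 (R : realType) (isC : bool) (g : R -> R) (a b : R)
  (g_nondecr : {homo g : x y / x <= y})
  (g_leftcont : forall t : R, g x @[x --> t^'-] --> g t)
  (ab : a < b) (a_notin : ~ Ngminus g a)
  (b_notin : ~ (Dg g b \/ Cg g b \/ Ngplus g b))
  (n : nat) (n_ge2 : (2 <= n)%N) (t : R) (t_in : a <= t <= b)
  (f : 'I_n -> R -> Fld R isC)
  (f_diff : forall j : 'I_n, gdifferentiable g a b (f j) t) :
  gdifferentiable g a b (fun s => \prod_(j < n) f j s) t /\
  gderiv g a b (fun s => \prod_(j < n) f j s) t =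
    \sum_(k < n) (toF isC (Deltag g (tstar g t))) ^+ k *
      (\sum_(sigma in Fnk n k.+1)
         \prod_(j < n) gderiv_sigma g a b (f j) (sigma j) (tstar g t)).
Proof.
set x := tstar g t; set A := gderiv_dom g a b t.
have clA : closure A x := gderiv_dom_closure g_nondecr g_leftcont ab a_notin b_notin t_in.
have quot_cvg j : gdiff_quot g (f j) x s @[s --> within A (nbhs x)] --> gderiv g a b (f j) x.
  have [L fL] := f_diff j.
  by rewrite (gderiv_tstar g_nondecr g_leftcont ab a_notin b_notin t_in fL); apply/is_gderiv_cvg.
have denom_neq0 : \forall s \near within A (nbhs x), toF isC (g s - g x) != 0.
  by rewrite near_withinE; apply: nearW => s /gderiv_dom_neq gs; rewrite toF_eq0 subr_eq0; apply/eqP.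
have denom_cvg : toF isC (g s - g x) @[s --> within A (nbhs x)] --> toF isC (Deltag g x).
  exact: (cvg_toF (cvg_gderiv_dom g_nondecr g_leftcont t_in)).
have prod_deriv : is_gderiv g a b (fun s => \prod_(j < n) f j s) t
    (\sum_(k < n) toF isC (Deltag g x) ^+ k * \sum_(sigma in Fnk n k.+1)
       \prod_(j < n) (if sigma j then gderiv g a b (f j) x else f j x)).
  by apply/is_gderiv_cvg; exact: (cvg_prod_diff_quot denom_neq0 quot_cvg denom_cvg).
split; first by eexists; exact: prod_deriv.
by rewrite (gderiv_unique clA prod_deriv).
Qed.
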